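(* Let $T=(\vec G,G,\prec,A)$ be a strictly simplicial twisted graph with edge set $E$. Then for every $\boldsymbol\theta\in\mathbb{R}^E$ respecting $\prec$ there is a set $B\subset\mathcal C(\prec)$ such that the system of strict linear inequalities $\widehat c\cdot\mathbf r>0$, $c\in A\cup B$, in the unknown $\mathbf r\in\mathbb{R}^E$, is a minimal insoluble system.
   Context: Signed sets on a finite set $E$: pairs $X=(X^+,X^-)$ of disjoint subsets, $X(e)=+1,-1,0$ according as $e\in X^+$, $e\in X^-$, or neither; support $\underline X=X^+\cup X^-$. Conformal: no $e$ with $X(e)=-Y(e)\ne0$; composition $(X\circ Y)(e)=X(e)$ if $X(e)\ne0$, else $Y(e)$. For a total order $<$ on $E$, $\mathcal C(<)=\{(\{e_1,e_3\},\{e_2\}),(\{e_2\},\{e_1,e_3\}):e_1<e_2<e_3\}$ (circuits of the rank 2 oriented matroid $\mathcal M(<)$; vectors are compositions of pairwise conformal families of circuits); for a partial order $\prec$, $\mathcal C(\prec)=\bigcap_{<\supseteq\prec}\mathcal C(<)$. For a directed graph $\vec G=(V,\vec E)$ (no loops, parallel or antiparallel edges), underlying simple graph $G=(V,E)$, a strong map $\mathcal M^*(\vec G)\to\mathcal M(<)$ means every signed minimal cut $(\{(u,w):u\in S,w\notin S\},\{(u,w):w\in S,u\notin S\})$ ($S$, $V\setminus S$ inducing connected subgraphs) is a vector of $\mathcal M(<)$; $C^*_v=(\{(u,v)\in\vec E\},\{(v,u)\in\vec E\})$. A twisted graph $T=(\vec G,G,\prec,A)$: $\prec$ a partial order on $E$,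 $G$ three-edge-connected, $A\subset\mathcal C(\prec)$, a strong map $\mathcal M^*(\vec G)\to\mathcal M(<)$ for every total $<\supseteq\prec$, and a partition $A=\bigsqcup_{v}A_v$ with members of $A_v$ pairwise conformal and composing to $C^*_v$. $\boldsymbol\theta\in\mathbb{R}^E$ respects $\prec$ if $0<\theta_e<180$ (degrees) and $\theta_e<\theta_f$ whenever $e\prec f$. For $c\in\mathcal C(\prec)$, $\widehat c\in\mathbb{R}^E$ has $\widehat c(e)=0$ for $e\notin\underline c$ and $\widehat c(e)=c(e)\sin(\theta_{e''}-\theta_{e'})$ if $\underline c=\{e,e',e''\}$ with $e'\prec e''$; $\Sigma(T)$ is the matrix with rows $\widehat a$, $a\in A$. A matrix with $r+1$ rows and $r$ columns is a simplex if its rows have a linear dependency with all coefficients positive and every row dependency is a multiple of it. $T$ is simplicial on $F$ if for every $\boldsymbol\theta$ respecting $\prec$ the submatrix of $\Sigma(T)$ on columns $F$ is a simplex; $T$ is strictly simplicial if it is simplicial on some $F$ with $E\setminus F$ totally ordered by $\prec$. A system $M\mathbf r>0$ is minimal insoluble if it has no solution but every system obtained by deleting at least one inequality has a solution. *)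

From HB Require Import structures.
From mathcomp Require Import all_boot all_order all_algebra.
From mathcomp Require Import reals trigo.
Set Implicit Arguments. Unset Strict Implicit. Unset Printing Implicit Defensive.
Import Order.TTheory GRing.Theory Num.Theory.

Section SignedSets.
Variable E : finType.

(* a signed set X = (X^+, X^-) *)
Definition sset := ({set E} * {set E})%type.

Definition supp (X : sset) : {set E} := X.1 :|: X.2.

Definition sgn (X : sset) (e : E) : int :=
  if e \in X.1 then 1%R else if e \in X.2 then (-1)%R else 0%R.

Definition conformal (X Y : sset) : bool :=
  [disjoint X.1 & Y.2] && [disjoint X.2 & Y.1].

(* (X o Y)(e) = X(e) if X(e) <> 0, else Y(e) *)
Definition compose (X Y : sset) : sset :=
  (X.1 :|: (Y.1 :\: supp X), X.2 :|: (Y.2 :\: supp X)).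

Definition sset0 : sset := (set0, set0).

Definition compose_seq (s : seq sset) : sset := foldr compose sset0 s.
End SignedSets.

Section Orders.
Variable E : finType.

Definition strict_porder (prec : rel E) : Prop :=
  irreflexive prec /\ transitive prec.

Definition total_ext (prec lt : rel E) : Prop :=
  [/\ irreflexive lt, transitive lt,
      (forall e f, e != f -> lt e f || lt f e)
    & (forall e f, prec e f -> lt e f)].

Definition circuit_tot (lt : rel E) (X : sset E) : Prop :=
  exists e1 e2 e3, [/\ lt e1 e2, lt e2 e3 &
     (X = ([set e1; e3], [set e2]) \/ X = ([set e2], [set e1; e3]))].

Definition circuit_po (prec : rel E) (X : sset E) : Prop :=
  forall lt, total_ext prec lt -> circuit_tot lt X.

Definition vector_tot (lt : rel E) (X : sset E) : Prop :=
  exists s : seq (sset E),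
    [/\ (forall c, c \in s -> circuit_tot lt c),
        (forall c d, c \in s -> d \in s -> conformal c d)
      & X = compose_seq s].
End Orders.

Section Graphs.
Variables (V E : finType) (src tgt : E -> V).
(* edge e is the directed edge (src e, tgt e); the underlying simple graph
   G = (V, E) has e joining src e and tgt e *)

Definition no_loops : Prop := forall e, src e != tgt e.

Definition no_parallel_antiparallel : Prop :=
  forall e f, ((src e == src f) && (tgt e == tgt f))
              || ((src e == tgt f) && (tgt e == src f)) -> e = f.

Definition adj_in (S : {set V}) (F : {set E}) : rel V :=
  fun u w => [exists e in F, [&& src e \in S, tgt e \in S &
     ((src e == u) && (tgt e == w)) || ((src e == w) && (tgt e == u))]].

Definition induces_connected (S : {set V}) : bool :=
  (S != set0) &&
  [forall u in S, forall w in S, connect (adj_in S setT) u w].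

Definition three_edge_connected : Prop :=
  forall F : {set E}, #|F| <= 2 ->
    forall u w, connect (adj_in setT (~: F)) u w.

Definition signed_cut (S : {set V}) : sset E :=
  ([set e | (src e \in S) && (tgt e \notin S)],
   [set e | (tgt e \in S) && (src e \notin S)]).

Definition cocirc (v : V) : sset E :=
  ([set e | tgt e == v], [set e | src e == v]).

(* strong map M*(G) -> M(<) : every signed minimal cut is a vector of M(<) *)
Definition strong_map (lt : rel E) : Prop :=
  forall S : {set V}, induces_connected S -> induces_connected (~: S) ->
    vector_tot lt (signed_cut S).

Definition twisted_graph (prec : rel E) (A : {set sset E}) : Prop :=
  no_loops /\ no_parallel_antiparallel /\ strict_porder prec /\
  three_edge_connected /\
  (forall a, a \in A -> circuit_po prec a) /\
  (forall lt, total_ext prec lt -> strong_map lt) /\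
  exists part : sset E -> V, forall v : V,
        (forall a b, a \in A -> b \in A -> part a = v -> part b = v ->
           conformal a b)
        /\ compose_seq (enum [set a in A | part a == v]) = cocirc v.
End Graphs.

Local Open Scope ring_scope.
Section Sigma.
Variables (R : realType) (E : finType).

Definition sin_deg (x : R) : R := sin (x * pi / 180).

Definition respects (prec : rel E) (theta : E -> R) : Prop :=
  (forall e, 0 < theta e < 180) /\ (forall e f, prec e f -> theta e < theta f).

(* hat c (e) = c(e) sin(theta_{e''} - theta_{e'}) where supp c = {e,e',e''}
   and e' prec e'' (the sum below has exactly that one term for c in C(prec)) *)
Definition hat (prec : rel E) (theta : E -> R) (c : sset E) (e : E) : R :=
  if e \in supp c then
    (sgn c e)%:~R *
    \sum_(e1 in supp c) \sum_(e2 in supp c)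
       (if [&& e1 != e, e2 != e & prec e1 e2]
        then sin_deg (theta e2 - theta e1) else 0)
  else 0.

Definition is_simplex (A : {set sset E}) (F : {set E}) (M : sset E -> E -> R)
  : Prop :=
  #|A| = (#|F| + 1)%N /\
  exists lam : sset E -> R,
    [/\ (forall a, a \in A -> 0 < lam a),
        (forall e, e \in F -> \sum_(a in A) lam a * M a e = 0)
      & (forall mu : sset E -> R,
           (forall e, e \in F -> \sum_(a in A) mu a * M a e = 0) ->
           exists k : R, forall a, a \in A -> mu a = k * lam a)].

Definition simplicial_on (prec : rel E) (A : {set sset E}) (F : {set E})
  : Prop :=
  forall theta : E -> R, respects prec theta -> is_simplex A F (hat prec theta).

Definition strictly_simplicial (prec : rel E) (A : {set sset E}) : Prop :=
  exists F : {set E}, simplicial_on prec A F /\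
    (forall e f, e \notin F -> f \notin F -> e != f -> prec e f || prec f e).

Definition soluble (I : {set sset E}) (M : sset E -> E -> R) : Prop :=
  exists r : E -> R, forall c, c \in I -> 0 < \sum_(e : E) M c e * r e.

Definition minimal_insoluble (I : {set sset E}) (M : sset E -> E -> R)
  : Prop :=
  ~ soluble I M /\ (forall J : {set sset E}, J \proper I -> soluble J M).
End Sigma.

From HB Require Import structures.
From mathcomp Require Import all_boot all_order all_algebra.
From mathcomp Require Import reals trigo.
From mathcomp Require Import ring lra.
Set Implicit Arguments. Unset Strict Implicit. Unset Printing Implicit Defensive.
Import Order.TTheory GRing.Theory Num.Theory.

(* Write t_e for theta_e in radians.  A circuit of C(prec) is a sorted triple
   x < y < z signed (+,-,+) or (-,+,-), and its row is, up to sign,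
   (sin(t_z - t_y), -sin(t_z - t_x), sin(t_y - t_x)) on x, y, z; by the sine
   subtraction formula every such row is orthogonal to the vectors (cos t_e)_e
   and (sin t_e)_e.  The columns outside F form a chain: choose one or two
   pivots in it, and for every other such column j on which the positive
   dependency w of A does not vanish, add the circuit on the pivots and j,
   oriented and scaled so as to cancel column j.  The resulting positive
   combination vanishes off the pivots and is orthogonal to both trigonometric
   vectors, so it vanishes, because the (cos, sin) vectors of two angles in
   (0, pi) are independent.  It is unique up to scaling since each added row is
   the only new row meeting its column, and a system whose row dependencies
   form a single positive ray is minimal insoluble. *)

Section LinearExtension.
Variable E : finType.
Implicit Types p lt : rel E.

Lemma sporder_neq p x y : strict_porder p -> p x y -> x != y.
Proof. by case=> irr _ pxy; apply/eqP => exy; rewrite exy irr in pxy. Qed.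

Lemma sporder_asym p x y : strict_porder p -> p x y -> p y x -> False.
Proof. by case=> irr tr xy yx; have := tr _ _ _ xy yx; rewrite irr. Qed.

Definition down_card p (e : E) : nat := #|[set x | p x e]|.

Definition linext p : rel E := fun e f =>
  (down_card p e < down_card p f)%N ||
  ((down_card p e == down_card p f) && (enum_rank e < enum_rank f)%N).

Lemma down_card_lt p e f : strict_porder p -> p e f ->
  (down_card p e < down_card p f)%N.
Proof.
move=> sp pef; have [irr tr] := sp; apply/proper_card/properP; split.
  by apply/subsetP => x; rewrite !inE => pxe; exact: tr pxe pef.
by exists e; rewrite !inE // irr.
Qed.

Lemma linextP p : strict_porder p -> total_ext p (linext p).
Proof.
move=> sp; split.
- by move=> e; rewrite /linext ltnn eqxx ltnn.
- move=> y x z; rewrite /linext => /orP[H1|/andP[/eqP H1 H2]] /orP[H3|/andP[/eqP H3 H4]].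
  + by rewrite (ltn_trans H1 H3).
  + by rewrite -H3 H1.
  + by rewrite H1 H3.
  + by rewrite H1 H3 eqxx (ltn_trans H2 H4) orbT.
- move=> e f nef; rewrite /linext.
  case: (ltngtP (down_card p e) (down_card p f)) => //= _.
  case: (ltngtP (enum_rank e) (enum_rank f)) => // /val_inj/enum_rank_inj ef.
  by rewrite ef eqxx in nef.
- by move=> e f pef; rewrite /linext down_card_lt.
Qed.

Definition below_pair p x y z : rel E := fun a b =>
  p a b || (((a == x) || p a x) && [|| b == y, p y b, b == z | p z b]).

Lemma below_pair_sporder p x y z : strict_porder p -> x != y -> x != z ->
  ~~ p y x -> ~~ p z x -> strict_porder (below_pair p x y z).
Proof.
move=> [irr tr] xy xz yx zx; split.
  move=> a; rewrite /below_pair irr /=; apply/negP => /andP[/orP[/eqP->|ax]].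
    by rewrite (negbTE yx) (negbTE zx) (negbTE xy) (negbTE xz).
  case/or4P => [/eqP ay|ya|/eqP az|za].
  - by move: ax; rewrite ay (negbTE yx).
  - by rewrite (tr _ _ _ ya ax) in yx.
  - by move: ax; rewrite az (negbTE zx).
  - by rewrite (tr _ _ _ za ax) in zx.
have up_closed b c : p b c -> [|| b == y, p y b, b == z | p z b] ->
    [|| c == y, p y c, c == z | p z c].
  move=> bc /or4P [/eqP eb|yb|/eqP eb|zb].
  - by rewrite -eb bc orbT.
  - by rewrite (tr _ _ _ yb bc) orbT.
  - by rewrite -eb bc !orbT.
  - by rewrite (tr _ _ _ zb bc) !orbT.
have down_closed a b : p a b -> ((b == x) || p b x) -> ((a == x) || p a x).
  by move=> ab /orP[/eqP<-|bx]; rewrite ?ab ?(tr _ _ _ ab bx) orbT.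
move=> b a c; rewrite /below_pair => /orP[ab|/andP[ax bt]] /orP[bc|/andP[bx ct]].
- by rewrite (tr _ _ _ ab bc).
- by rewrite (down_closed _ _ ab bx) ct orbT.
- by rewrite ax (up_closed _ _ bc bt) orbT.
- by rewrite ax ct orbT.
Qed.

Lemma total_ext_below p x y z : strict_porder p -> x != y -> x != z ->
  ~~ p y x -> ~~ p z x -> exists lt, [/\ total_ext p lt, lt x y & lt x z].
Proof.
move=> sp xy xz yx zx.
have [_ _ _ sub] := linextP (below_pair_sporder sp xy xz yx zx).
exists (linext (below_pair p x y z)); split.
- have [? ? ? _] := linextP (below_pair_sporder sp xy xz yx zx).
  by split=> // e f pef; apply: sub; rewrite /below_pair pef.
- by apply: sub; rewrite /below_pair !eqxx orbT.
- by apply: sub; rewrite /below_pair !eqxx !orbT.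
Qed.

Lemma total_ext_above p x y z : strict_porder p -> x != y -> x != z ->
  ~~ p x y -> ~~ p x z -> exists lt, [/\ total_ext p lt, lt y x & lt z x].
Proof.
move=> [irr tr] xy xz yx zx.
have sp' : strict_porder (fun a b => p b a) by split=> // b a c ab bc; exact: tr bc ab.
have [lt [[irr' tr' tot sub] lxy lxz]] := total_ext_below sp' xy xz yx zx.
exists (fun a b => lt b a); split=> //; split=> //.
- by move=> b a c ab bc; exact: tr' bc ab.
- by move=> e f ef; rewrite orbC tot.
- by move=> e f pef; apply: sub.
Qed.

End LinearExtension.

Section Circuits.
Variables (E : finType) (p : rel E).
Hypothesis sp : strict_porder p.

Definition sopp (X : sset E) : sset E := (X.2, X.1).

Lemma sorted_circuit_po x y z : p x y -> p y z ->
  circuit_po p ([set x; z], [set y]) /\ circuit_po p ([set y], [set x; z]).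
Proof. by move=> pxy pyz; split=> lt [_ _ _ sub]; exists x, y, z; split; auto. Qed.

Lemma supp_sorted (x y z : E) :
  supp ([set x; z], [set y]) = [set x; y; z] /\ supp ([set y], [set x; z]) = [set x; y; z].
Proof.
by split; apply/setP => f; rewrite /supp !inE; case: (f == x); case: (f == y); case: (f == z).
Qed.

Lemma set2_eq1 (a b c : E) : [set a; b] = [set c] -> a = c /\ b = c.
Proof.
move=> abc; have : a \in [set c] by rewrite -abc !inE eqxx.
have : b \in [set c] by rewrite -abc !inE eqxx orbT.
by rewrite !inE => /eqP -> /eqP ->.
Qed.

Lemma circuit_tot_between lt (c : sset E) e1 e2 e3 :
  total_ext p lt -> circuit_tot lt c ->
  (c = ([set e1; e3], [set e2]) \/ c = ([set e2], [set e1; e3])) ->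
  exists f1 f3, [/\ lt f1 e2, lt e2 f3, f1 \in [set e1; e3] & f3 \in [set e1; e3]].
Proof.
case=> irr tr _ _ [g1 [g2 [g3 [l12 l23 Hg]]]] He.
have l13 := tr _ _ _ l12 l23.
case: Hg => -> in He; case: He => [[H1 H2]|[H1 H2]].
- exists g1, g3; rewrite -(set1_inj H2) -H1 !inE !eqxx orbT; split=> //.
- by case: (set2_eq1 H1) => E1 E2; move: l13; rewrite E1 E2 irr.
- by case: (set2_eq1 H2) => E1 E2; move: l13; rewrite E1 E2 irr.
- exists g1, g3; rewrite -(set1_inj H1) -H2 !inE !eqxx orbT; split=> //.
Qed.

(* The middle element of a circuit of C(prec) cannot be pushed below (or above)
   both others by a total extension, hence it is between them in [p] itself. *)
Lemma circuit_po_sorted (c : sset E) : circuit_po p c ->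
  exists x y z, [/\ p x y, p y z &
    (c = ([set x; z], [set y]) \/ c = ([set y], [set x; z]))].
Proof.
move=> cpo; have ext0 := linextP sp.
have [e1 [e2 [e3 [l12 l23 He]]]] := cpo _ ext0.
have [irr0 tr0 _ sub0] := ext0.
have n21 : e2 != e1 by apply/eqP => E21; rewrite E21 irr0 in l12.
have n23 : e2 != e3 by apply/eqP => E23; rewrite E23 irr0 in l23.
have ext_sp lt : total_ext p lt -> strict_porder lt by case.
have below : p e1 e2 || p e3 e2.
  apply/negPn/negP; rewrite negb_or => /andP[h1 h3].
  have [lt [ext h2 h4]] := total_ext_below sp n21 n23 h1 h3.
  have [f1 [_ [lf _ f1in _]]] := circuit_tot_between ext (cpo _ ext) He.
  by move: f1in; rewrite !inE => /orP[] /eqP Ef; rewrite Ef in lf;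
    [exact: sporder_asym (ext_sp _ ext) lf h2 | exact: sporder_asym (ext_sp _ ext) lf h4].
have above : p e2 e1 || p e2 e3.
  apply/negPn/negP; rewrite negb_or => /andP[h1 h3].
  have [lt [ext h2 h4]] := total_ext_above sp n21 n23 h1 h3.
  have [_ [f3 [_ lf _ f3in]]] := circuit_tot_between ext (cpo _ ext) He.
  by move: f3in; rewrite !inE => /orP[] /eqP Ef; rewrite Ef in lf;
    [exact: sporder_asym (ext_sp _ ext) lf h2 | exact: sporder_asym (ext_sp _ ext) lf h4].
exists e1, e2, e3; split=> //.
- by case/orP: below => // h; case: (sporder_asym (ext_sp _ ext0) l23 (sub0 _ _ h)).
- by case/orP: above => // h; case: (sporder_asym (ext_sp _ ext0) l12 (sub0 _ _ h)).
Qed.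

Lemma circuit_po_sopp (c : sset E) : circuit_po p c -> circuit_po p (sopp c).
Proof.
case/circuit_po_sorted => x [y [z [pxy pyz [] ->]]];
  by have [C1 C2] := sorted_circuit_po pxy pyz.
Qed.

Lemma sopp_neq (c : sset E) : circuit_po p c -> sopp c != c.
Proof.
case/circuit_po_sorted => x [y [z [pxy _ c_xyz]]]; apply/eqP => c_sym.
have /set2_eq1 [xy _] : [set x; z] = [set y] by case: c_xyz c_sym => -> [E1 E2].
by rewrite xy sp.1 in pxy.
Qed.

Lemma supp_sopp (c : sset E) : supp (sopp c) = supp c.
Proof. by rewrite /supp setUC. Qed.

Lemma circuit_po_of_chain x y z : p x y -> z != x -> z != y ->
  p x z || p z x -> p y z || p z y ->
  exists c, circuit_po p c /\ supp c = [set x; y; z].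
Proof.
have sorted a b d : p a b -> p b d -> [set a; b; d] = [set x; y; z] ->
    exists c, circuit_po p c /\ supp c = [set x; y; z].
  move=> pab pbd <-; have [C1 _] := sorted_circuit_po pab pbd.
  by exists ([set a; d], [set b]); split=> //; case: (supp_sorted a b d).
move=> pxy zx zy /orP[pxz|pzx] yz.
- case/orP: yz => [pyz|pzy]; [apply: (sorted x y z) | apply: (sorted x z y)] => //.
  by apply/setP => f; rewrite !inE; case: (f == x); case: (f == y); case: (f == z).
- apply: (sorted z x y) => //.
  by apply/setP => f; rewrite !inE; case: (f == x); case: (f == y); case: (f == z).
Qed.

End Circuits.

Local Open Scope ring_scope.

Lemma free_rows_soluble (R : fieldType) (E S : finType) (J : {set S}) (M : S -> E -> R) :
  (forall nu : S -> R, (forall e, \sum_(c in J) nu c * M c e = 0) ->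
     forall c, c \in J -> nu c = 0) ->
  exists r : E -> R, forall c, c \in J -> \sum_e M c e * r e = 1.
Proof.
move=> free; pose Mx : 'M[R]_(#|J|, #|E|) := \matrix_(i, j) M (enum_val i) (enum_val j).
have /row_freeP [B MxB] : row_free Mx.
  rewrite -kermx_eq0; apply/eqP/row_matrixP => i.
  set v := row i (kermx Mx).
  have vMx : v *m Mx = 0 by apply/sub_kermxP; exact: row_sub.
  pose nu c := \sum_(k < #|J| | enum_val k == c) v 0 k.
  have nuE k : nu (enum_val k) = v 0 k.
    by rewrite /nu (big_pred1 k) // => k'; apply/eqP/eqP => [/enum_val_inj|->].
  have nu_dep e : \sum_(c in J) nu c * M c e = 0.
    rewrite (big_enum_val (A := mem J)) /=.
    have := congr1 (fun A : 'M[R]_(1, #|E|) => A 0 (enum_rank e)) vMx.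
    rewrite /= !mxE; apply: etrans; apply: eq_bigr => k _.
    by rewrite nuE ?mxE enum_rankK.
  by rewrite row0; apply/rowP => j; rewrite -nuE (free nu nu_dep) ?enum_valP // !mxE.
pose X := B *m const_mx 1 : 'M[R]_(#|E|, 1).
exists (fun e => X (enum_rank e) 0) => c cJ.
rewrite (reindex (@enum_val E predT)) /=; last exact: onW_bij (enum_val_bij E).
rewrite -(enum_rankK_in cJ cJ); set i := enum_rank_in cJ c.
have <- : (Mx *m X) i 0 = 1 by rewrite /X mulmxA MxB mul1mx !mxE.
rewrite mxE; apply: eq_bigr => j _; have jK : enum_rank (enum_val j) = j := enum_valK j.
by rewrite [Mx _ _]mxE jK.
Qed.

(* A positive dependency rules out a solution; since it spans all dependencies,
   every proper subsystem has independent rows and is solved by [free_rows_soluble]. *)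
Lemma minimal_insoluble_of_dependency (R : realType) (E : finType)
  (I : {set sset E}) (M : sset E -> E -> R) (k : sset E -> R) :
  I != set0 -> (forall c, c \in I -> 0 < k c) ->
  (forall e, \sum_(c in I) k c * M c e = 0) ->
  (forall nu : sset E -> R, (forall e, \sum_(c in I) nu c * M c e = 0) ->
     exists t, forall c, c \in I -> nu c = t * k c) ->
  minimal_insoluble I M.
Proof.
move=> /set0Pn [c0 c0I] k_gt0 k_dep k_uniq; split.
  case=> r r_sol.
  suff : 0 < \sum_(c in I) k c * \sum_e M c e * r e.
    under eq_bigr do rewrite mulr_sumr.
    rewrite exchange_big /= big1 ?ltxx // => e _.
    by under eq_bigr do rewrite mulrA; rewrite -mulr_suml k_dep mul0r.
  rewrite (bigD1 c0) //=; apply: ltr_pwDl; first by rewrite mulr_gt0 ?k_gt0 ?r_sol.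
  by apply: sumr_ge0 => c /andP[cI _]; rewrite mulr_ge0 ?ltW ?k_gt0 ?r_sol.
move=> J /properP [JI [c1 c1I c1J]].
have [r r_sol] : exists r : E -> R, forall c, c \in J -> \sum_e M c e * r e = 1.
  apply: free_rows_soluble => nu nu_dep.
  pose nu' c := if c \in J then nu c else 0.
  have [t nu't] : exists t, forall c, c \in I -> nu' c = t * k c.
    apply: k_uniq => e; rewrite (big_setID J) /= [X in _ + X]big1 ?addr0; last first.
      by move=> c /setDP [_ cJ]; rewrite /nu' (negbTE cJ) mul0r.
    rewrite (setIidPr JI) -[RHS](nu_dep e).
    by apply: eq_bigr => c cJ; rewrite /nu' cJ.
  have t0 : t = 0.
    have /esym/eqP := nu't c1 c1I; rewrite /nu' (negbTE c1J).
    by rewrite mulf_eq0 (gt_eqF (k_gt0 c1 c1I)) orbF => /eqP.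
  by move=> c cJ; have := nu't c (subsetP JI c cJ); rewrite /nu' cJ t0 mul0r.
by exists r => c cJ; rewrite r_sol.
Qed.

(* A dependency of the completed system restricts on [F] to one of [A], hence
   is a multiple of [lam] there, and column [j] then fixes its value on [b j]. *)
Section Completion.
Variables (R : realType) (E : finType) (M : sset E -> E -> R).
Variables (A : {set sset E}) (F : {set E}) (lam : sset E -> R).
Hypotheses (A_neq0 : A != set0) (lam_gt0 : forall a, a \in A -> 0 < lam a).
Hypothesis lam_uniq : forall mu : sset E -> R,
  (forall e, e \in F -> \sum_(a in A) mu a * M a e = 0) ->
  exists t, forall a, a \in A -> mu a = t * lam a.
Variables (J : {set E}) (b : E -> sset E) (m : E -> R).
Hypotheses (b_notin_A : forall j, j \in J -> b j \notin A)
  (b_on_F : forall j e, j \in J -> e \in F -> M (b j) e = 0)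
  (b_private : forall i j, i \in J -> j \in J -> i != j -> M (b i) j = 0)
  (b_pivot : forall j, j \in J -> M (b j) j != 0)
  (m_gt0 : forall j, j \in J -> 0 < m j).
Hypothesis completes : forall e,
  \sum_(a in A) lam a * M a e + \sum_(j in J) m j * M (b j) e = 0.

Lemma completion_inj : {in J &, injective b}.
Proof.
move=> i j iJ jJ bij; apply/eqP/negPn/negP => ij.
by have := b_pivot jJ; rewrite -bij b_private ?eqxx.
Qed.

Lemma big_completion (nu : sset E -> R) e :
  \sum_(c in A :|: b @: J) nu c * M c e =
  \sum_(a in A) nu a * M a e + \sum_(j in J) nu (b j) * M (b j) e.
Proof.
rewrite (big_setID A) /= (setIidPr (subsetUl _ _)).
have -> : (A :|: b @: J) :\: A = b @: J.
  apply/setP => c; rewrite !inE; case cA: (c \in A) => //=.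
  by apply/esym/negP => /imsetP [j jJ cE]; move: (b_notin_A jJ); rewrite -cE cA.
by rewrite (big_imset _ completion_inj).
Qed.

Lemma completion_column (g : E -> R) j : j \in J ->
  \sum_(i in J) g i * M (b i) j = g j * M (b j) j.
Proof.
move=> jJ; rewrite (bigD1 j) //= big1 ?addr0 // => i /andP [iJ ij].
by rewrite b_private ?mulr0.
Qed.

Lemma completion_on_F (g : E -> R) e : e \in F -> \sum_(j in J) g j * M (b j) e = 0.
Proof. by move=> eF; rewrite big1 // => j jJ; rewrite b_on_F ?mulr0. Qed.

Theorem minimal_insoluble_completion : minimal_insoluble (A :|: b @: J) M.
Proof.
pose kappa c := if c \in A then lam c else \sum_(j in J | b j == c) m j.
have kappa_b j : j \in J -> kappa (b j) = m j.
  move=> jJ; rewrite /kappa (negbTE (b_notin_A jJ)) (big_pred1 j) // => i /=.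
  by apply/andP/eqP => [[iJ /eqP /completion_inj] -> //|->]; rewrite eqxx.
apply: (minimal_insoluble_of_dependency (k := kappa)).
- by case/set0Pn: A_neq0 => a aA; apply/set0Pn; exists a; rewrite inE aA.
- move=> c /setUP [cA|/imsetP [j jJ ->]]; first by rewrite /kappa cA lam_gt0.
  by rewrite kappa_b ?m_gt0.
- move=> e; rewrite big_completion -[RHS](completes e); congr (_ + _).
    by apply: eq_bigr => a aA; rewrite /kappa aA.
  by apply: eq_bigr => j jJ; rewrite kappa_b.
move=> nu nu_dep.
have [t nu_t] : exists t, forall a, a \in A -> nu a = t * lam a.
  by apply: lam_uniq => e eF; have := nu_dep e; rewrite big_completion completion_on_F ?addr0.
exists t => c /setUP [cA|/imsetP [j jJ ->]]; first by rewrite /kappa cA nu_t.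
have e1 := nu_dep j; rewrite big_completion (completion_column _ jJ) in e1.
have e2 := completes j; rewrite (completion_column _ jJ) in e2.
have sumA : \sum_(a in A) nu a * M a j = t * \sum_(a in A) lam a * M a j.
  by rewrite mulr_sumr; apply: eq_bigr => a aA; rewrite nu_t // mulrA.
have : (nu (b j) - t * m j) * M (b j) j =
    (\sum_(a in A) nu a * M a j + nu (b j) * M (b j) j) -
    t * (\sum_(a in A) lam a * M a j + m j * M (b j) j) by rewrite sumA; ring.
rewrite e1 e2 mulr0 subr0 kappa_b // => /eqP.
by rewrite mulf_eq0 (negbTE (b_pivot jJ)) orbF subr_eq0 => /eqP.
Qed.
End Completion.

Section Hat.
Variables (R : realType) (E : finType) (p : rel E) (th : E -> R).
Hypothesis sp : strict_porder p.

Local Notation hat := (hat p th).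

Definition rad (e : E) : R := th e * pi / 180.

Definition gap (a b : E) : R := sin (rad b - rad a).

Lemma sin_deg_gap a b : sin_deg (th b - th a) = gap a b.
Proof. by rewrite /gap /sin_deg /rad; congr sin; ring. Qed.

Definition hat_tri x y z (e : E) : R :=
  if e == x then gap y z else if e == y then - gap x z else if e == z then gap x y else 0.

Lemma hat_sum_sorted x y z f : p x y -> p y z ->
  \sum_(e1 in x |: (y |: [set z])) \sum_(e2 in x |: (y |: [set z]))
    (if [&& e1 != f, e2 != f & p e1 e2] then sin_deg (th e2 - th e1) else 0) =
  (if (x != f) && (y != f) then gap x y else 0) +
  (if (x != f) && (z != f) then gap x z else 0) +
  (if (y != f) && (z != f) then gap y z else 0).
Proof.
have [irr tr] := sp; move=> pxy pyz; have pxz := tr _ _ _ pxy pyz.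
have [pyx pzy pzx] : [/\ p y x = false, p z y = false & p z x = false].
  by split; apply/negP => h; [move: (tr _ _ _ pxy h) | move: (tr _ _ _ pyz h)
    | move: (tr _ _ _ pxz h)]; rewrite irr.
have xn : x \notin y |: [set z].
  by rewrite !inE negb_or (sporder_neq sp pxy) (sporder_neq sp pxz).
have yn : y \notin [set z] by rewrite inE (sporder_neq sp pyz).
rewrite !big_setU1 ?big_set1 //= !big_setU1 ?big_set1 //= !irr pxy pxz pyx pyz pzx pzy.
rewrite !andbF !andbT !sin_deg_gap.
by case: (x != f); case: (y != f); case: (z != f); rewrite /= ?addr0 ?add0r ?addrA.
Qed.

Lemma hat_sorted x y z (c : sset E) (s : R) : p x y -> p y z ->
  (c = ([set x; z], [set y]) /\ s = 1) \/ (c = ([set y], [set x; z]) /\ s = -1) ->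
  forall e, hat c e = s * hat_tri x y z e.
Proof.
move=> pxy pyz c_s e; have pxz := sp.2 _ _ _ pxy pyz.
have nxy := sporder_neq sp pxy; have nyz := sporder_neq sp pyz.
have nxz := sporder_neq sp pxz.
have supp_c : supp c = x |: (y |: [set z]).
  rewrite setUA; have [S1 S2] := supp_sorted x y z.
  by case: c_s => [[-> _]|[-> _]]; [rewrite S1 | rewrite S2].
rewrite /hat supp_c hat_sum_sorted // !inE /hat_tri.
have [Fxy Fyz Fxz] : [/\ (x == y) = false, (y == z) = false & (x == z) = false].
  by split; apply/negbTE.
have [Fyx Fzy Fzx] : [/\ (y == x) = false, (z == y) = false & (z == x) = false].
  by rewrite !(eq_sym _ x) (eq_sym z y).
case: (e =P x) => [->|_]; last case: (e =P y) => [->|_]; last case: (e =P z) => [->|_];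
  last by rewrite mulr0.
all: rewrite ?eqxx ?Fxy ?Fyz ?Fxz ?Fyx ?Fzy ?Fzx /=.
all: case: c_s => [[-> ->]|[-> ->]]; rewrite /sgn !inE !eqxx ?Fxy ?Fyz ?Fxz ?Fyx ?Fzy ?Fzx /=.
all: ring.
Qed.

Lemma hat_circuit (c : sset E) : circuit_po p c ->
  exists x y z (s : R), [/\ p x y, p y z, s = 1 \/ s = -1,
     supp c = [set x; y; z] & forall e, hat c e = s * hat_tri x y z e].
Proof.
case/(circuit_po_sorted sp) => x [y [z [pxy pyz c_xyz]]].
have [S1 S2] := supp_sorted x y z.
case: c_xyz => c_xyz; [exists x, y, z, 1 | exists x, y, z, (-1)];
  split; rewrite ?c_xyz //; auto; apply: hat_sorted => //; [left | right]; done.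
Qed.

Lemma hat_eq0 (c : sset E) e : e \notin supp c -> hat c e = 0.
Proof. by rewrite /hat => /negbTE ->. Qed.

Lemma hat_sopp (c : sset E) e : circuit_po p c -> hat (sopp c) e = - hat c e.
Proof.
case/(circuit_po_sorted sp) => x [y [z [pxy pyz c_xyz]]].
have h1 := hat_sorted (s := 1) pxy pyz (or_introl (conj erefl erefl)).
have h2 := hat_sorted (s := -1) pxy pyz (or_intror (conj erefl erefl)).
by case: c_xyz => ->; rewrite /sopp /= h1 h2 mul1r mulN1r ?opprK.
Qed.

Definition cs_orthogonal (v : E -> R) : Prop :=
  \sum_e v e * cos (rad e) = 0 /\ \sum_e v e * sin (rad e) = 0.

Lemma sum_hat_tri x y z (u : E -> R) : x != y -> y != z -> x != z ->
  \sum_e hat_tri x y z e * u e = gap y z * u x - gap x z * u y + gap x y * u z.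
Proof.
move=> nxy nyz nxz; rewrite (bigD1 x) //= (bigD1 y) 1?eq_sym //=.
rewrite (bigD1 z) /=; last by rewrite eq_sym nxz eq_sym nyz.
rewrite big1 => [|e /andP[/andP[ex ey] ez]]; last first.
  by rewrite /hat_tri (negbTE ex) (negbTE ey) (negbTE ez) mul0r.
rewrite /hat_tri !eqxx (eq_sym y x) (negbTE nxy) (eq_sym z x) (negbTE nxz).
by rewrite (eq_sym z y) (negbTE nyz) addr0 addrA mulNr.
Qed.

Lemma hat_tri_orthogonal x y z : x != y -> y != z -> x != z ->
  cs_orthogonal (hat_tri x y z).
Proof. by move=> nxy nyz nxz; rewrite /cs_orthogonal !sum_hat_tri // /gap !sinB; split; ring. Qed.

Lemma hat_cs_orthogonal (c : sset E) : circuit_po p c -> cs_orthogonal (hat c).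
Proof.
case/hat_circuit => x [y [z [s [pxy pyz _ _ hat_c]]]].
have [D1 D2] := hat_tri_orthogonal (sporder_neq sp pxy) (sporder_neq sp pyz)
  (sporder_neq sp (sp.2 _ _ _ pxy pyz)).
by split; under eq_bigr do rewrite hat_c -mulrA; rewrite -mulr_sumr ?D1 ?D2 mulr0.
Qed.

Lemma cs_orthogonal_comb (T : finType) (I : {set T}) (f : T -> R) (v : T -> E -> R) :
  (forall i, i \in I -> cs_orthogonal (v i)) ->
  cs_orthogonal (fun e => \sum_(i in I) f i * v i e).
Proof.
move=> v_orth.
have comb u : (forall i, i \in I -> \sum_e v i e * u e = 0) ->
    \sum_e (\sum_(i in I) f i * v i e) * u e = 0.
  move=> v_u; under eq_bigr do rewrite mulr_suml.
  rewrite exchange_big big1 //= => i iI.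
  by under eq_bigr do rewrite -mulrA; rewrite -mulr_sumr v_u ?mulr0.
by split; apply: comb => i /v_orth[].
Qed.

Lemma cs_orthogonalD (u v : E -> R) :
  cs_orthogonal u -> cs_orthogonal v -> cs_orthogonal (u \+ v).
Proof.
move=> [u1 u2] [v1 v2]; split; under eq_bigr do rewrite mulrDl;
  by rewrite big_split /= ?u1 ?u2 ?v1 ?v2 addr0.
Qed.

Lemma unit_vec_eq0 (d a : R) : d * cos a = 0 -> d * sin a = 0 -> d = 0.
Proof.
move=> dc ds; rewrite -[d]mulr1 -(cos2Dsin2 a).
transitivity (cos a * (d * cos a) + sin a * (d * sin a)); first by ring.
by rewrite dc ds !mulr0 addr0.
Qed.

Lemma unit_vec2_eq0 (d1 d2 a b : R) : sin (b - a) != 0 ->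
  d1 * cos a + d2 * cos b = 0 -> d1 * sin a + d2 * sin b = 0 -> d1 = 0 /\ d2 = 0.
Proof.
move=> sn0 dc ds.
have k1 : d1 * sin (b - a) = sin b * (d1 * cos a + d2 * cos b) - cos b * (d1 * sin a + d2 * sin b).
  by rewrite sinB; ring.
have k2 : d2 * sin (b - a) = cos a * (d1 * sin a + d2 * sin b) - sin a * (d1 * cos a + d2 * cos b).
  by rewrite sinB; ring.
rewrite dc ds !mulr0 subr0 in k1 k2.
by split; [move/eqP: k1 | move/eqP: k2]; rewrite mulf_eq0 (negbTE sn0) orbF => /eqP.
Qed.

(* The vectors (cos, sin) of at most two angles whose difference is not a
   multiple of pi are independent. *)
Lemma cs_orthogonal_eq0 (v : E -> R) x y : cs_orthogonal v ->
  (forall e, e \notin [set x; y] -> v e = 0) -> x = y \/ gap x y != 0 ->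
  forall e, v e = 0.
Proof.
move=> [vc vs] v_out xy e.
have [|/v_out //] := boolP (e \in [set x; y]).
suff [vx vy] : v x = 0 /\ v y = 0 by rewrite !inE => /orP[] /eqP ->.
have sum1 (u : E -> R) : x = y -> \sum_e v e * u e = v x * u x.
  move=> exy; rewrite (bigD1 x) //= big1 ?addr0 // => f fx.
  by rewrite v_out ?mul0r // !inE -exy orbb.
have sum2 (u : E -> R) : x != y -> \sum_e v e * u e = v x * u x + v y * u y.
  move=> nxy; rewrite (bigD1 x) //= (bigD1 y) 1?eq_sym //= big1 ?addr0 ?addrA //.
  by move=> f /andP[fx fy]; rewrite v_out ?mul0r // !inE negb_or fx fy.
case: xy => [exy|gap0].
  rewrite !(sum1 _ exy) in vc vs; rewrite -exy.
  by have vx := unit_vec_eq0 vc vs.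
have nxy : x != y by apply: contraNneq gap0 => ->; rewrite /gap subrr sin0.
rewrite !(sum2 _ nxy) in vc vs; exact: unit_vec2_eq0 gap0 vc vs.
Qed.

Hypothesis resp : respects p th.

Lemma gap_gt0 a b : p a b -> 0 < gap a b.
Proof.
move=> pab; have [range mono] := resp; have ab := mono _ _ pab.
have /andP[a0 a180] := range a; have /andP[b0 b180] := range b.
rewrite -sin_deg_gap /sin_deg; apply: sin_gt0_pi; have pi0 := pi_gt0 R.
rewrite divr_gt0 ?mulr_gt0 ?subr_gt0 //= ltr_pdivrMr // mulrC ltr_pM2l //; lra.
Qed.

Lemma hat_neq0 (c : sset E) e : circuit_po p c -> e \in supp c -> hat c e != 0.
Proof.
case/hat_circuit => x [y [z [s [pxy pyz s1 -> hat_c]]]].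
have pxz := sp.2 _ _ _ pxy pyz.
have s0 : s != 0 by case: s1 => ->; rewrite ?oppr_eq0 oner_eq0.
rewrite hat_c mulf_eq0 negb_or s0 /hat_tri !inE.
case/orP => [/orP[]|] /eqP ->; rewrite eqxx.
- by rewrite gt_eqF ?gap_gt0.
- by rewrite (eq_sym y) (negbTE (sporder_neq sp pxy)) oppr_eq0 gt_eqF ?gap_gt0.
- rewrite (eq_sym z) (negbTE (sporder_neq sp pxz)) (eq_sym z).
  by rewrite (negbTE (sporder_neq sp pyz)) gt_eqF ?gap_gt0.
Qed.

Lemma scaled_circuit (c : sset E) e t : circuit_po p c -> e \in supp c -> t != 0 ->
  exists b m, [/\ circuit_po p b, supp b = supp c, 0 < m & m * hat b e = t].
Proof.
move=> cpo ec t0; have h0 := hat_neq0 cpo ec.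
have m0_neq0 : t / hat c e != 0 by rewrite mulf_neq0 ?invr_neq0.
have [m0_gt0|m0_le0] := ltrP 0 (t / hat c e).
  by exists c, (t / hat c e); rewrite divfK.
exists (sopp c), (- (t / hat c e)); split.
- exact: circuit_po_sopp.
- exact: supp_sopp.
- by rewrite oppr_gt0 lt_neqAle m0_neq0.
- by rewrite hat_sopp // mulrNN divfK.
Qed.

End Hat.

Lemma simplex_row_neq0 (R : realType) (E : finType) (M : sset E -> E -> R)
  (A : {set sset E}) (F : {set E}) : is_simplex A F M -> F != set0 ->
  forall a, a \in A -> exists2 e, e \in F & M a e != 0.
Proof.
move=> [cardA [lam [lam_gt0 _ lam_uniq]]] F0 a aA.
apply/exists_inP; apply: contraT; rewrite negb_exists_in => /forall_inP Ma0.
pose mu c : R := (c == a)%:R.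
have [t mu_t] : exists t, forall c, c \in A -> mu c = t * lam c.
  apply: lam_uniq => e eF; rewrite (bigD1 a) //= big1 ?addr0.
    by rewrite /mu eqxx mul1r; apply/eqP; exact: negbNE (Ma0 e eF).
  by move=> c /andP [_ ca]; rewrite /mu (negbTE ca) mul0r.
have /set0Pn [a' /setD1P [a'a a'A]] : A :\ a != set0.
  rewrite -card_gt0; have := cardsD1 a A; rewrite aA cardA add1n addn1 => -[<-].
  by rewrite card_gt0.
have := mu_t a' a'A; rewrite /mu (negbTE a'a) => /esym/eqP.
rewrite mulf_eq0 (gt_eqF (lam_gt0 a' a'A)) orbF => /eqP t0.
by have := mu_t a aA; rewrite /mu eqxx t0 mul0r => /eqP; rewrite oner_eq0.
Qed.

(* Two pivots in the chain [~: F]; they coincide only when [~: F] has at most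
   one element. *)
Lemma chain_pivots (E : finType) (p : rel E) (F : {set E}) (x0 : E) :
  (forall e f, e \notin F -> f \notin F -> e != f -> p e f || p f e) ->
  exists pp qq, (pp = qq \/ p pp qq) /\ forall j, j \notin F ->
    j \notin [set pp; qq] -> [/\ pp \notin F, qq \notin F & pp != qq].
Proof.
move=> chain.
have [/existsP [x /existsP [y /and3P [xF yF xy]]]|no_pair] :=
  boolP [exists x, exists y, [&& x \notin F, y \notin F & x != y]].
  case/orP: (chain x y xF yF xy) => [pxy|pyx]; [exists x, y | exists y, x];
    by split; [right | split; rewrite // eq_sym].
set pp := odflt x0 [pick x | x \notin F].
exists pp, pp; split=> [|j jF]; first by left.
rewrite /pp; case: pickP => [x xF|/(_ j)]; last by rewrite jF.
rewrite setUid inE => jx; case/negP: no_pair.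
by apply/existsP; exists j; apply/existsP; exists x; rewrite jF xF jx.
Qed.

Section Pivots.
Variables (R : realType) (E : finType) (p : rel E) (th : E -> R).
Hypotheses (sp : strict_porder p) (resp : respects p th).
Local Notation hat := (hat p th).
Variables (A : {set sset E}) (F : {set E}) (lam : sset E -> R).
Hypotheses (A_circuits : forall a, a \in A -> circuit_po p a)
  (chain : forall e f, e \notin F -> f \notin F -> e != f -> p e f || p f e)
  (lam_dep : forall e, e \in F -> \sum_(a in A) lam a * hat a e = 0).
Variables pp qq : E.
Hypotheses (pivots_sorted : pp = qq \/ p pp qq)
  (pivots_chain : forall j, j \notin F -> j \notin [set pp; qq] ->
     [/\ pp \notin F, qq \notin F & pp != qq]).

Let w e := \sum_(a in A) lam a * hat a e.
Let J := [set j | [&& j \notin F, j \notin [set pp; qq] & w j != 0]].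

Lemma exists_pivot_circuit j : exists bm : sset E * R, j \in J ->
  [/\ circuit_po p bm.1, supp bm.1 = [set pp; qq; j], 0 < bm.2 & bm.2 * hat bm.1 j = - w j].
Proof.
have [jJ|] := boolP (j \in J); last by exists (sset0 E, 0).
move: (jJ); rewrite inE => /and3P [jF jpq wj].
have [ppF qqF ppqq] := pivots_chain jF jpq.
have ppqq' : p pp qq by case: pivots_sorted => // epq; rewrite epq eqxx in ppqq.
move: jpq; rewrite !inE negb_or => /andP [jp jq].
have [c [cpo supp_c]] : exists c, circuit_po p c /\ supp c = [set pp; qq; j].
  by apply: circuit_po_of_chain; rewrite // chain // eq_sym.
have jc : j \in supp c by rewrite supp_c !inE eqxx orbT.
have wj' : - w j != 0 by rewrite oppr_eq0.
have [b [m [bpo supp_b m_gt0 mb]]] := scaled_circuit sp resp cpo jc wj'.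
by exists (b, m); rewrite supp_b.
Qed.

Section PivotCircuits.
Variables (b : E -> sset E) (m : E -> R).
Hypothesis bm_spec : forall j, j \in J ->
  [/\ circuit_po p (b j), supp (b j) = [set pp; qq; j], 0 < m j & m j * hat (b j) j = - w j].

Lemma pivot_hat_eq0 j e : j \in J -> e \notin [set pp; qq; j] -> hat (b j) e = 0.
Proof. by move=> /bm_spec [_ supp_b _ _] e_out; rewrite hat_eq0 // supp_b. Qed.

Lemma pivot_hat_on_F j e : j \in J -> e \in F -> hat (b j) e = 0.
Proof.
move=> jJ eF; move: (jJ); rewrite inE => /and3P [jF jpq _].
have [ppF qqF _] := pivots_chain jF jpq.
by apply: pivot_hat_eq0; rewrite // !inE; apply/negP => /orP[/orP[]|] /eqP ef;
  [move: ppF | move: qqF | move: jF]; rewrite -ef eF.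
Qed.

Lemma pivot_hat_private i j : i \in J -> j \in J -> i != j -> hat (b i) j = 0.
Proof.
move=> iJ jJ ij; apply: pivot_hat_eq0; rewrite // !inE (eq_sym j i) (negbTE ij) orbF.
by move: jJ; rewrite !inE => /and3P [].
Qed.

Lemma pivot_hat_neq0 j : j \in J -> hat (b j) j != 0.
Proof.
move=> /bm_spec [bpo supp_b _ _]; apply: hat_neq0 => //.
by rewrite supp_b !inE eqxx orbT.
Qed.

Lemma pivot_column e : e \notin [set pp; qq] ->
  \sum_(j in J) m j * hat (b j) e = if e \in J then - w e else 0.
Proof.
move=> epq; have off j : j \in J -> j != e -> hat (b j) e = 0.
  move=> jJ je; apply: pivot_hat_eq0 => //.
  by move: epq; rewrite !inE (eq_sym e j) (negbTE je) orbF.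
case: ifP => [eJ|eJ]; last by rewrite big1 // => j jJ; rewrite off ?mulr0 //;
  apply: contraFneq eJ => <-.
have [_ _ _ <-] := bm_spec eJ.
by rewrite (bigD1 e) //= big1 ?addr0 // => j /andP [jJ je]; rewrite off ?mulr0.
Qed.

(* The combined dependency is orthogonal to the (cos, sin) vectors of the angles
   and vanishes off the two pivots, so it vanishes everywhere. *)
Lemma pivot_completes e : w e + \sum_(j in J) m j * hat (b j) e = 0.
Proof.
have orth : cs_orthogonal th (fun e => w e + \sum_(j in J) m j * hat (b j) e).
  apply: cs_orthogonalD; apply: cs_orthogonal_comb.
    by move=> a /A_circuits; exact: hat_cs_orthogonal.
  by move=> j /bm_spec [bpo _ _ _]; exact: hat_cs_orthogonal.
apply: (cs_orthogonal_eq0 (x := pp) (y := qq) orth) => [f fpq|]; last first.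
  by case: pivots_sorted => [|ppqq]; [left | right; rewrite gt_eqF ?(gap_gt0 resp ppqq)].
rewrite pivot_column //; case: ifP => [_|fJ]; first by rewrite addrN.
rewrite addr0; have [fF|fF] := boolP (f \in F); first exact: lam_dep.
by apply/eqP; move: fJ; rewrite inE fF fpq /= => /negbT; rewrite negbK.
Qed.

End PivotCircuits.

Lemma pivot_completion : A != set0 -> (forall a, a \in A -> 0 < lam a) ->
  (forall mu : sset E -> R, (forall e, e \in F -> \sum_(a in A) mu a * hat a e = 0) ->
     exists t, forall a, a \in A -> mu a = t * lam a) ->
  (forall a, a \in A -> exists2 e, e \in F & hat a e != 0) ->
  exists B : {set sset E},
    (forall c, c \in B -> circuit_po p c) /\ minimal_insoluble (A :|: B) hat.
Proof.
move=> A0 lam_gt0 lam_uniq A_F.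
have [bm bm_spec] := fin_all_exists exists_pivot_circuit.
pose b j := (bm j).1; pose m j := (bm j).2.
exists (b @: J); split; first by move=> c /imsetP [j /bm_spec [bpo _ _ _] ->].
apply: (minimal_insoluble_completion A0 lam_gt0 lam_uniq (m := m)).
- move=> j jJ; apply/negP => /A_F [e eF].
  by rewrite (pivot_hat_on_F bm_spec) ?eqxx.
- by move=> j e jJ eF; rewrite (pivot_hat_on_F bm_spec).
- by move=> i j iJ jJ ij; rewrite (pivot_hat_private bm_spec).
- by move=> j jJ; rewrite (pivot_hat_neq0 bm_spec).
- by move=> j /bm_spec [].
- exact: pivot_completes bm_spec.
Qed.

End Pivots.

Section SimplexCompletion.
Variables (R : realType) (E : finType) (p : rel E) (th : E -> R).
Hypotheses (sp : strict_porder p) (resp : respects p th).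
Local Notation hat := (hat p th).
Variables (A : {set sset E}) (F : {set E}).
Hypothesis A_circuits : forall a, a \in A -> circuit_po p a.

(* With no columns the simplex is a single circuit; its negative completes it. *)
Lemma simplex0_completion : is_simplex A set0 hat ->
  exists B : {set sset E},
    (forall c, c \in B -> circuit_po p c) /\ minimal_insoluble (A :|: B) hat.
Proof.
move=> [cardA [lam [lam_gt0 _ lam_uniq]]].
have /cards1P [a A_a] : #|A| == 1%N by rewrite cardA cards0.
have aA : a \in A by rewrite A_a set11.
have apo := A_circuits aA.
have [x [y [z [s [_ _ _ supp_a _]]]]] := hat_circuit th sp apo.
have xa : x \in supp a by rewrite supp_a !inE eqxx.
exists ((fun=> sopp a) @: [set x]); split.
  by move=> c /imsetP [_ _ ->]; exact: circuit_po_sopp.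
have A0 : A != set0 by apply/set0Pn; exists a.
apply: (minimal_insoluble_completion A0 lam_gt0 lam_uniq (m := fun=> lam a)).
- by move=> j _; rewrite A_a inE (sopp_neq sp).
- by move=> j e _; rewrite inE.
- by move=> i j /set1P -> /set1P ->; rewrite eqxx.
- by move=> j /set1P ->; rewrite (hat_sopp th sp) // oppr_eq0 (hat_neq0 sp resp).
- by move=> j _; exact: lam_gt0.
- by move=> e; rewrite A_a !big_set1 (hat_sopp th sp) // mulrN addrN.
Qed.

Lemma simplex_completion : is_simplex A F hat ->
  (forall e f, e \notin F -> f \notin F -> e != f -> p e f || p f e) ->
  exists B : {set sset E},
    (forall c, c \in B -> circuit_po p c) /\ minimal_insoluble (A :|: B) hat.
Proof.
have [/eqP -> simplex _|F0 simplex chain] := boolP (F == set0).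
  exact: simplex0_completion.
have A_F := simplex_row_neq0 simplex F0.
have [_ [lam [lam_gt0 lam_dep lam_uniq]]] := simplex.
have A0 : A != set0 by rewrite -card_gt0 simplex.1 addn1.
have /set0Pn [x0 _] := F0.
have [pp [qq [pivots_sorted pivots_chain]]] := chain_pivots x0 chain.
by apply: (pivot_completion sp resp A_circuits chain lam_dep pivots_sorted pivots_chain).
Qed.

End SimplexCompletion.

Theorem mainTheorem13 (R : realType) (V E : finType) (src tgt : E -> V)
  (prec : rel E) (A : {set sset E}) :
  twisted_graph src tgt prec A ->
  strictly_simplicial R prec A ->
  forall theta : E -> R, respects prec theta ->
  exists B : {set sset E},
    (forall b, b \in B -> circuit_po prec b) /\
    minimal_insoluble (A :|: B) (hat prec theta).
Proof.
move=> [_ [_ [sp [_ [A_circuits _]]]]] [F [simplicial chain]] theta resp.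
exact: (simplex_completion sp resp A_circuits (simplicial theta resp) chain).
Qed.
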